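(* If a language $L \subseteq \mathbb{N}$ is computably succinct, then any functional property $\psi$ that $L$ captures is in $\Pi^0_2$.
   Context: Programs (generators) are identified with natural numbers in a fixed universal programming language; $\varphi_g$ is the partial computable function computed by $g$, and $|g|$ denotes the length of program $g$ (e.g. number of bits of its representation). $L$ being computably succinct means that there is a computable function $f$ such that for every program $g \in \mathbb{N}$ for which some functionally equivalent program exists in $L$, there is $g' \in L$ with $\varphi_{g'} = \varphi_g$ and $|g'| \le f(|g|)$ (in the argument this is used in the form $g' \le f(g)$, a bound on the index). A property $\psi \subseteq \mathbb{N}$ is functional if whenever $\varphi_g = \varphi_{g'}$, $\psi(g) \leftrightarrow \psi(g')$. $L$ captures $\psi$ if $L$ is decidable, every $g \in L$ satisfies $\psi$, and for every $g' \in \mathbb{N}$ satisfying $\psi$ there is $g \in L$ with $\varphi_g = \varphi_{g'}$. *)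

(* A concrete fixed universal programming language:
   (untyped-arity) general recursive (mu-recursive) function codes, numbered
   by natural numbers via Cantor pairing. *)
From Stdlib Require Import Arith List Cantor.
Import ListNotations.

Inductive code : Type :=
| CZero : code
| CSucc : code
| CProj : nat -> code
| CComp : code -> list code -> code
| CPrec : code -> code -> code       (* primitive recursion on first arg *)
| CMu   : code -> code.              (* unbounded minimisation on first arg *)

Inductive eval : code -> list nat -> nat -> Prop :=
| ev_zero v : eval CZero v 0
| ev_succ x v : eval CSucc (x :: v) (S x)
| ev_proj i v : i < length v -> eval (CProj i) v (nth i v 0)
| ev_comp f gs v ws y :
    eval_list gs v ws -> eval f ws y -> eval (CComp f gs) v y
| ev_prec0 f g v y : eval f v y -> eval (CPrec f g) (0 :: v) y
| ev_precS f g n v z y :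
    eval (CPrec f g) (n :: v) z -> eval g (n :: z :: v) y ->
    eval (CPrec f g) (S n :: v) y
| ev_mu f v n :
    eval f (n :: v) 0 ->
    (forall m, m < n -> exists k, eval f (m :: v) (S k)) ->
    eval (CMu f) v n
with eval_list : list code -> list nat -> list nat -> Prop :=
| evl_nil v : eval_list [] v []
| evl_cons g gs v w ws :
    eval g v w -> eval_list gs v ws -> eval_list (g :: gs) v (w :: ws).

Fixpoint dec_fuel (fuel n : nat) {struct fuel} : code :=
  match fuel with
  | 0 => CZero
  | S fuel' =>
      let q := n / 6 in
      match n mod 6 with
      | 0 => CZero
      | 1 => CSucc
      | 2 => CProj q
      | 3 => let (a, b) := Cantor.of_nat q in
             CComp (dec_fuel fuel' a) (dec_list_fuel fuel' b)
      | 4 => let (a, b) := Cantor.of_nat q in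
             CPrec (dec_fuel fuel' a) (dec_fuel fuel' b)
      | _ => CMu (dec_fuel fuel' q)
      end
  end
with dec_list_fuel (fuel n : nat) {struct fuel} : list code :=
  match fuel with
  | 0 => []
  | S fuel' =>
      match n with
      | 0 => []
      | S m => let (a, b) := Cantor.of_nat m in
               dec_fuel fuel' a :: dec_list_fuel fuel' b
      end
  end.

Definition decode (g : nat) : code := dec_fuel (S g) g.

Definition phi (g x y : nat) : Prop := eval (decode g) [x] y.

Definition equiv_prog (g g' : nat) : Prop :=
  forall x y, phi g x y <-> phi g' x y.

(* |g| : length of the binary representation of g. *)
Definition prog_len (g : nat) : nat := S (Nat.log2 g).

Definition computable (f : nat -> nat) : Prop :=
  exists e : nat, forall n, eval (decode e) [n] (f n).

Definition decidable_set (L : nat -> Prop) : Prop :=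
  exists e : nat, forall n,
    (L n -> eval (decode e) [n] 1) /\ (~ L n -> eval (decode e) [n] 0).

Definition decidable_rel3 (R : nat -> nat -> nat -> Prop) : Prop :=
  exists e : nat, forall n x y,
    (R n x y -> eval (decode e) [n; x; y] 1) /\
    (~ R n x y -> eval (decode e) [n; x; y] 0).

Definition Pi02 (psi : nat -> Prop) : Prop :=
  exists R, decidable_rel3 R /\ forall n, psi n <-> forall x, exists y, R n x y.

Definition computably_succinct (L : nat -> Prop) : Prop :=
  exists f : nat -> nat, computable f /\
    forall g : nat,
      (exists g0, L g0 /\ equiv_prog g0 g) ->
      exists g', L g' /\ equiv_prog g' g /\ prog_len g' <= f (prog_len g).

Definition functional (psi : nat -> Prop) : Prop :=
  forall g g', equiv_prog g g' -> (psi g <-> psi g').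

Definition captures (L psi : nat -> Prop) : Prop :=
  decidable_set L /\
  (forall g, L g -> psi g) /\
  (forall g', psi g' -> exists g, L g /\ equiv_prog g g').

(* A program [n] has [psi] iff some [g] in [L] is equivalent to it, and by
   succinctness such a [g] can be found below [2 ^ f |n|].  Equivalence of [g] and
   [n] is a [Pi^0_2] statement once "[c] maps [x] to [y]" is given a decidable
   certificate: a finite set of evaluation judgments, each justified by others in
   the set according to the rules of [eval].  So [psi n] holds iff for every [s]
   there is [t] such that some [g < 2 ^ f |n|] has a certificate for [L g] below
   [t] and agrees with [n] on all computations certified below [s], the agreement
   being certified below [t]; the finitely many candidates [g] make the
   quantifier "some [g]" commute with "for every [s]".  The matrix is a bounded
   arithmetic formula, which is decided by a compiled primitive recursive code. *)

From Stdlib Require Import Arith List Lia Cantor Bool Setoid Classical.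
Import ListNotations.

Arguments to_nat : simpl never.
Arguments of_nat : simpl never.

(** * Primitive recursive codes *)

Fixpoint code_const (c : nat) : code :=
  match c with 0 => CZero | S c => CComp CSucc [code_const c] end.

Lemma eval_code_const c v : eval (code_const c) v c.
Proof.
  induction c as [|c IHc]; cbn.
  - constructor.
  - econstructor; [constructor; [exact IHc | constructor] | constructor].
Qed.

Lemma eval_proj_nth i v y : i < length v -> nth i v 0 = y -> eval (CProj i) v y.
Proof. intros Hi <-; now constructor. Qed.

Ltac eval_proj := apply eval_proj_nth; [cbn; lia | cbn; reflexivity].

Lemma eval_comp1 f a v x y : eval a v x -> eval f [x] y -> eval (CComp f [a]) v y.
Proof. intros Ha Hf; econstructor; [repeat constructor; eassumption | exact Hf]. Qed.

Lemma eval_comp2 f a b v x y z :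
  eval a v x -> eval b v y -> eval f [x; y] z -> eval (CComp f [a; b]) v z.
Proof. intros Ha Hb Hf; econstructor; [repeat constructor; eassumption | exact Hf]. Qed.

Lemma eval_prec base step env (F : nat -> nat) :
  eval base env (F 0) ->
  (forall n, eval step (n :: F n :: env) (F (S n))) ->
  forall t, eval (CPrec base step) (t :: env) (F t).
Proof.
  intros Hbase Hstep t; induction t as [|t IHt].
  - now constructor.
  - econstructor; eauto.
Qed.

Definition code_add : code := CPrec (CProj 0) (CComp CSucc [CProj 1]).

Lemma eval_code_add x y : eval code_add [x; y] (x + y).
Proof.
  apply (eval_prec _ _ [y] (fun x => x + y)); [eval_proj|].
  intros n; apply eval_comp1 with (n + y); [eval_proj | constructor].
Qed.

Definition code_mul : code := CPrec CZero (CComp code_add [CProj 1; CProj 2]).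

Lemma eval_code_mul x y : eval code_mul [x; y] (x * y).
Proof.
  apply (eval_prec _ _ [y] (fun x => x * y)); [constructor|].
  intros n; eapply eval_comp2; [eval_proj | eval_proj |].
  rewrite Nat.mul_succ_l; apply eval_code_add.
Qed.

Definition code_pred : code := CPrec CZero (CProj 0).

Lemma eval_code_pred x : eval code_pred [x] (pred x).
Proof. apply (eval_prec _ _ [] pred); [constructor | intros n; eval_proj]. Qed.

Definition code_sub : code := CPrec (CProj 0) (CComp code_pred [CProj 1]).

Lemma eval_code_sub x y : eval code_sub [y; x] (x - y).
Proof.
  apply (eval_prec _ _ [x] (fun y => x - y)); [rewrite Nat.sub_0_r; eval_proj|].
  intros n; eapply eval_comp1; [eval_proj|].
  replace (x - S n) with (pred (x - n)) by lia; apply eval_code_pred.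
Qed.

Definition code_pos : code := CPrec CZero (code_const 1).

Lemma eval_code_pos x : eval code_pos [x] (Nat.b2n (0 <? x)).
Proof.
  apply (eval_prec _ _ [] (fun x => Nat.b2n (0 <? x))); [constructor|].
  intros n; apply eval_code_const.
Qed.

Definition code_pow : code := CPrec (code_const 1) (CComp code_mul [CProj 1; CProj 2]).

Lemma eval_code_pow a b : eval code_pow [b; a] (a ^ b).
Proof.
  apply (eval_prec _ _ [a] (fun b => a ^ b)); [apply eval_code_const|].
  intros n; eapply eval_comp2; [eval_proj | eval_proj |].
  rewrite Nat.pow_succ_r', Nat.mul_comm; apply eval_code_mul.
Qed.

Definition code_pair (a b : code) : code :=
  CComp code_add
    [b; CComp (CPrec CZero (CComp code_add [CComp CSucc [CProj 0]; CProj 1]))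
           [CComp code_add [b; a]]].

Lemma eval_code_pair a b v x y :
  eval a v x -> eval b v y -> eval (code_pair a b) v (to_nat (x, y)).
Proof.
  intros Ha Hb; eapply eval_comp2; [exact Hb| |apply eval_code_add].
  eapply eval_comp1; [eapply eval_comp2; [exact Hb | exact Ha | apply eval_code_add]|].
  apply (eval_prec _ _ [] (nat_rec _ 0 (fun i m => S i + m))); [constructor|].
  intros n; eapply eval_comp2; [| eval_proj | apply eval_code_add].
  eapply eval_comp1; [eval_proj | constructor].
Qed.

Definition code_negb (c : code) : code := CComp code_sub [c; code_const 1].
Definition code_andb (c d : code) : code := CComp code_mul [c; d].
Definition code_orb (c d : code) : code := CComp code_pos [CComp code_add [c; d]].
Definition code_ltb (c d : code) : code := CComp code_pos [CComp code_sub [c; d]].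
Definition code_eqb (c d : code) : code := code_negb (code_orb (code_ltb c d) (code_ltb d c)).

Lemma eval_code_negb c v b :
  eval c v (Nat.b2n b) -> eval (code_negb c) v (Nat.b2n (negb b)).
Proof.
  intros Hc; eapply eval_comp2; [exact Hc | apply eval_code_const |].
  replace (Nat.b2n (negb b)) with (1 - Nat.b2n b) by now destruct b.
  apply eval_code_sub.
Qed.

Lemma eval_code_andb c d v b1 b2 :
  eval c v (Nat.b2n b1) -> eval d v (Nat.b2n b2) -> eval (code_andb c d) v (Nat.b2n (b1 && b2)).
Proof.
  intros Hc Hd; eapply eval_comp2; [exact Hc | exact Hd |].
  replace (Nat.b2n (b1 && b2)) with (Nat.b2n b1 * Nat.b2n b2)
    by now destruct b1, b2.
  apply eval_code_mul.
Qed.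

Lemma eval_code_orb c d v b1 b2 :
  eval c v (Nat.b2n b1) -> eval d v (Nat.b2n b2) -> eval (code_orb c d) v (Nat.b2n (b1 || b2)).
Proof.
  intros Hc Hd; eapply eval_comp1; [eapply eval_comp2; [exact Hc | exact Hd | apply eval_code_add]|].
  replace (b1 || b2) with (0 <? Nat.b2n b1 + Nat.b2n b2) by now destruct b1, b2.
  apply eval_code_pos.
Qed.

Lemma eval_code_ltb c d v x y :
  eval c v x -> eval d v y -> eval (code_ltb c d) v (Nat.b2n (x <? y)).
Proof.
  intros Hc Hd; eapply eval_comp1; [eapply eval_comp2; [exact Hc | exact Hd | apply eval_code_sub]|].
  replace (x <? y) with (0 <? y - x).
  - apply eval_code_pos.
  - apply Bool.eq_iff_eq_true; rewrite !Nat.ltb_lt; lia.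
Qed.

Lemma eval_code_eqb c d v x y :
  eval c v x -> eval d v y -> eval (code_eqb c d) v (Nat.b2n (x =? y)).
Proof.
  intros Hc Hd.
  replace (x =? y) with (negb ((x <? y) || (y <? x))).
  - apply eval_code_negb, eval_code_orb; apply eval_code_ltb; assumption.
  - apply Bool.eq_iff_eq_true.
    rewrite negb_true_iff, orb_false_iff, Nat.eqb_eq, !Nat.ltb_ge; lia.
Qed.

Definition code_odd : code := CPrec CZero (code_negb (CProj 1)).

Lemma eval_code_odd n : eval code_odd [n] (Nat.b2n (Nat.odd n)).
Proof.
  apply (eval_prec _ _ [] (fun n => Nat.b2n (Nat.odd n))); [constructor|].
  intros m; rewrite Nat.odd_succ, <- Nat.negb_odd.
  apply eval_code_negb; eval_proj.
Qed.

Lemma div2_succ n : Nat.div2 (S n) = Nat.div2 n + Nat.b2n (Nat.odd n).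
Proof.
  pose proof (Nat.div2_odd n) as Hn; pose proof (Nat.div2_odd (S n)) as HSn.
  rewrite Nat.odd_succ, <- Nat.negb_odd in HSn.
  destruct (Nat.odd n); cbn in *; lia.
Qed.

Definition code_div2 : code :=
  CPrec CZero (CComp code_add [CProj 1; CComp code_odd [CProj 0]]).

Lemma eval_code_div2 n : eval code_div2 [n] (Nat.div2 n).
Proof.
  apply (eval_prec _ _ [] Nat.div2); [constructor|].
  intros m; rewrite div2_succ.
  eapply eval_comp2; [eval_proj | eapply eval_comp1; [eval_proj | apply eval_code_odd] |].
  apply eval_code_add.
Qed.

Definition code_testbit (s j : code) : code :=
  CComp code_odd [CComp (CPrec (CProj 0) (CComp code_div2 [CProj 1])) [j; s]].

Lemma eval_code_testbit s j v a n :
  eval s v a -> eval j v n -> eval (code_testbit s j) v (Nat.b2n (Nat.testbit a n)).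
Proof.
  intros Hs Hj; rewrite Nat.testbit_odd.
  eapply eval_comp1; [|apply eval_code_odd].
  econstructor; [repeat constructor; eassumption|].
  apply (eval_prec _ _ [a] (Nat.shiftr a)); [eval_proj|].
  intros m; eapply eval_comp1; [eval_proj | apply eval_code_div2].
Qed.

(** * Bounded arithmetic formulas *)

Inductive term : Type :=
| TVar (i : nat)
| TConst (c : nat)
| TAdd (a b : term)
| TMul (a b : term)
| TPow (a b : term)
| TPair (a b : term)
| TSucc (a : term).

Inductive formula : Type :=
| FEq (a b : term)
| FLt (a b : term)
| FBit (s j : term)
| FNot (f : formula)
| FAnd (f g : formula)
| FOr (f g : formula)
| FLet (x : nat) (t : term) (f : formula)
| FAll (x : nat) (t : term) (f : formula)
| FEx (x : nat) (t : term) (f : formula).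

Definition upd (r : nat -> nat) (x n : nat) : nat -> nat :=
  fun i => if i =? x then n else r i.

Fixpoint eval_term (r : nat -> nat) (t : term) : nat :=
  match t with
  | TVar i => r i
  | TConst c => c
  | TAdd a b => eval_term r a + eval_term r b
  | TMul a b => eval_term r a * eval_term r b
  | TPow a b => eval_term r a ^ eval_term r b
  | TPair a b => to_nat (eval_term r a, eval_term r b)
  | TSucc a => S (eval_term r a)
  end.

Fixpoint sat (r : nat -> nat) (f : formula) : Prop :=
  match f with
  | FEq a b => eval_term r a = eval_term r b
  | FLt a b => eval_term r a < eval_term r b
  | FBit s j => Nat.testbit (eval_term r s) (eval_term r j) = true
  | FNot f => ~ sat r f
  | FAnd f g => sat r f /\ sat r g
  | FOr f g => sat r f \/ sat r g
  | FLet x t f => sat (upd r x (eval_term r t)) f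
  | FAll x t f => forall n, n < eval_term r t -> sat (upd r x n) f
  | FEx x t f => exists n, n < eval_term r t /\ sat (upd r x n) f
  end.

Fixpoint satb (r : nat -> nat) (f : formula) : bool :=
  match f with
  | FEq a b => eval_term r a =? eval_term r b
  | FLt a b => eval_term r a <? eval_term r b
  | FBit s j => Nat.testbit (eval_term r s) (eval_term r j)
  | FNot f => negb (satb r f)
  | FAnd f g => satb r f && satb r g
  | FOr f g => satb r f || satb r g
  | FLet x t f => satb (upd r x (eval_term r t)) f
  | FAll x t f => forallb (fun n => satb (upd r x n) f) (seq 0 (eval_term r t))
  | FEx x t f => existsb (fun n => satb (upd r x n) f) (seq 0 (eval_term r t))
  end.

Lemma satbP r f : satb r f = true <-> sat r f.
Proof.
  revert r; induction f as [a b|a b|s j|f IHf|f IHf g IHg|f IHf g IHg|x t f IHf|x t f IHf|x t f IHf];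
    intros r; cbn.
  - apply Nat.eqb_eq.
  - apply Nat.ltb_lt.
  - reflexivity.
  - rewrite negb_true_iff, <- IHf; destruct (satb r f); intuition congruence.
  - rewrite andb_true_iff, IHf, IHg; reflexivity.
  - rewrite orb_true_iff, IHf, IHg; reflexivity.
  - apply IHf.
  - rewrite forallb_forall; setoid_rewrite in_seq; setoid_rewrite IHf.
    split; intros H n Hn; apply H; lia.
  - rewrite existsb_exists; setoid_rewrite in_seq; setoid_rewrite IHf.
    split; intros (n & Hn & H); exists n; split; auto; lia.
Qed.

Fixpoint compile_term (K : nat) (t : term) : code :=
  match t with
  | TVar i => if i <? K then CProj i else CZero
  | TConst c => code_const c
  | TAdd a b => CComp code_add [compile_term K a; compile_term K b]
  | TMul a b => CComp code_mul [compile_term K a; compile_term K b]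
  | TPow a b => CComp code_pow [compile_term K b; compile_term K a]
  | TPair a b => code_pair (compile_term K a) (compile_term K b)
  | TSucc a => CComp CSucc [compile_term K a]
  end.

Definition env_agrees (r : nat -> nat) (env : list nat) : Prop :=
  forall i, r i = nth i env 0.

Lemma eval_compile_term env r t :
  env_agrees r env -> eval (compile_term (length env) t) env (eval_term r t).
Proof.
  intros Hr; induction t; cbn [compile_term eval_term].
  - rewrite Hr; destruct (Nat.ltb_spec i (length env)).
    + now apply eval_proj_nth.
    + rewrite nth_overflow by lia; constructor.
  - apply eval_code_const.
  - eapply eval_comp2; eauto; apply eval_code_add.
  - eapply eval_comp2; eauto; apply eval_code_mul.
  - eapply eval_comp2; eauto; apply eval_code_pow.
  - now apply eval_code_pair.
  - eapply eval_comp1; eauto; constructor.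
Qed.

Definition args_set (K x : nat) (c : code) (offset : nat) : list code :=
  map (fun i => if i =? x then c else CProj (offset + i)) (seq 0 K).

Definition list_set (env : list nat) (x n : nat) : list nat :=
  map (fun i => if i =? x then n else nth i env 0) (seq 0 (length env)).

Lemma nth_map_seq {A} (f : nat -> A) K i d : i < K -> nth i (map f (seq 0 K)) d = f i.
Proof.
  intros Hi; rewrite nth_indep with (d' := f 0) by now rewrite length_map, length_seq.
  now rewrite map_nth, seq_nth.
Qed.

Lemma eval_list_map {A} (h : A -> code) (F : A -> nat) v l :
  (forall a, In a l -> eval (h a) v (F a)) -> eval_list (map h l) v (map F l).
Proof. induction l; cbn; intros H; constructor; auto. Qed.

Lemma eval_args_set pre env x c n :
  eval c (pre ++ env) n ->
  eval_list (args_set (length env) x c (length pre)) (pre ++ env) (list_set env x n).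
Proof.
  intros Hc; apply eval_list_map; intros i Hi; apply in_seq in Hi.
  destruct (i =? x); [exact Hc|].
  apply eval_proj_nth; [rewrite length_app; lia|].
  rewrite app_nth2, Nat.add_comm, Nat.add_sub by lia; reflexivity.
Qed.

Lemma list_set_agrees r env x n :
  x < length env -> env_agrees r env -> env_agrees (upd r x n) (list_set env x n).
Proof.
  intros Hx Hr i; unfold upd, list_set.
  destruct (Nat.ltb_spec i (length env)).
  - now rewrite nth_map_seq, Hr.
  - rewrite nth_overflow by (rewrite length_map, length_seq; lia).
    destruct (Nat.eqb_spec i x); [lia|].
    now rewrite Hr, nth_overflow by lia.
Qed.

Lemma eval_projs env : eval_list (map CProj (seq 0 (length env))) env env.
Proof.
  replace env with (map (fun i => nth i env 0) (seq 0 (length env))) at 3.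
  - apply eval_list_map; intros i Hi; apply in_seq in Hi; apply eval_proj_nth; auto; lia.
  - apply nth_ext with 0 0; rewrite ?length_map, ?length_seq; auto.
    intros i Hi; now rewrite nth_map_seq.
Qed.

Definition code_bounded (op : code -> code -> code) (base : code) (K x : nat) (t body : code) :=
  CComp (CPrec base (op (CProj 1) (CComp body (args_set K x (CProj 0) 2))))
        (t :: map CProj (seq 0 K)).

Lemma eval_code_bounded op h base env x t body n (p F : nat -> bool) :
  (forall c d v b1 b2, eval c v (Nat.b2n b1) -> eval d v (Nat.b2n b2) ->
     eval (op c d) v (Nat.b2n (h b1 b2))) ->
  eval base env (Nat.b2n (F 0)) ->
  (forall m, F (S m) = h (F m) (p m)) ->
  eval t env n ->
  (forall m, eval body (list_set env x m) (Nat.b2n (p m))) ->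
  eval (code_bounded op base (length env) x t body) env (Nat.b2n (F n)).
Proof.
  intros Hop Hbase HF Ht Hbody.
  econstructor.
  - constructor; [exact Ht | apply eval_projs].
  - apply (eval_prec _ _ env (fun m => Nat.b2n (F m))); [exact Hbase|].
    intros m; rewrite HF; apply Hop; [eval_proj|].
    econstructor; [apply (eval_args_set [m; Nat.b2n (F m)]); constructor; cbn; lia|].
    apply Hbody.
Qed.

Fixpoint compile (K : nat) (f : formula) : code :=
  match f with
  | FEq a b => code_eqb (compile_term K a) (compile_term K b)
  | FLt a b => code_ltb (compile_term K a) (compile_term K b)
  | FBit s j => code_testbit (compile_term K s) (compile_term K j)
  | FNot f => code_negb (compile K f)
  | FAnd f g => code_andb (compile K f) (compile K g)
  | FOr f g => code_orb (compile K f) (compile K g)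
  | FLet x t f => CComp (compile K f) (args_set K x (compile_term K t) 0)
  | FAll x t f => code_bounded code_andb (code_const 1) K x (compile_term K t) (compile K f)
  | FEx x t f => code_bounded code_orb CZero K x (compile_term K t) (compile K f)
  end.

Fixpoint binders_below (K : nat) (f : formula) : bool :=
  match f with
  | FEq _ _ | FLt _ _ | FBit _ _ => true
  | FNot f => binders_below K f
  | FAnd f g | FOr f g => binders_below K f && binders_below K g
  | FLet x _ f | FAll x _ f | FEx x _ f => (x <? K) && binders_below K f
  end.

Lemma length_list_set env x n : length (list_set env x n) = length env.
Proof. unfold list_set; now rewrite length_map, length_seq. Qed.

Lemma eval_compile f : forall env r,
  env_agrees r env -> binders_below (length env) f = true ->
  eval (compile (length env) f) env (Nat.b2n (satb r f)).
Proof.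
  induction f as [a b|a b|s j|f IHf|f IHf g IHg|f IHf g IHg|x t f IHf|x t f IHf|x t f IHf];
    intros env r Hr Hf; cbn [compile satb binders_below] in *;
    repeat match goal with H : _ && _ = true |- _ => apply andb_true_iff in H as [? ?] end;
    try assert (Hbody : forall n, eval (compile (length env) f) (list_set env x n)
                                   (Nat.b2n (satb (upd r x n) f))) by
      (intros n; rewrite <- (length_list_set env x n);
       apply IHf; [apply list_set_agrees, Hr; apply Nat.ltb_lt; assumption
                  | now rewrite length_list_set]).
  - apply eval_code_eqb; now apply eval_compile_term.
  - apply eval_code_ltb; now apply eval_compile_term.
  - apply eval_code_testbit; now apply eval_compile_term.
  - apply eval_code_negb; auto.
  - apply eval_code_andb; auto.
  - apply eval_code_orb; auto.
  - econstructor; [apply (eval_args_set []), eval_compile_term, Hr | apply Hbody].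
  - set (p := fun m => satb (upd r x m) f).
    apply (eval_code_bounded _ andb _ _ _ _ _ _ p (fun m => forallb p (seq 0 m))).
    + exact eval_code_andb.
    + apply eval_code_const.
    + intros m; rewrite seq_S, forallb_app; cbn; now rewrite andb_true_r.
    + now apply eval_compile_term.
    + exact Hbody.
  - set (p := fun m => satb (upd r x m) f).
    apply (eval_code_bounded _ orb _ _ _ _ _ _ p (fun m => existsb p (seq 0 m))).
    + exact eval_code_orb.
    + constructor.
    + intros m; rewrite seq_S, existsb_app; cbn; now rewrite orb_false_r.
    + now apply eval_compile_term.
    + exact Hbody.
Qed.

(** * Goedel numbering *)

Lemma to_nat_ge x y : x <= to_nat (x, y) /\ y <= to_nat (x, y).
Proof. pose proof (to_nat_non_decreasing x y); lia. Qed.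

Lemma of_nat_le q a b : of_nat q = (a, b) -> a <= q /\ b <= q.
Proof. intros E; rewrite <- (cancel_to_of q), E; apply to_nat_ge. Qed.

Definition enc_cons (x l : nat) : nat := S (to_nat (x, l)).

Fixpoint enc_list (l : list nat) : nat :=
  match l with [] => 0 | x :: l => enc_cons x (enc_list l) end.

Lemma enc_list_surj n : exists l, enc_list l = n.
Proof.
  induction n as [[|n] IH] using lt_wf_ind; [now exists []|].
  destruct (of_nat n) as [a b] eqn:E.
  destruct (IH b) as [l <-]; [apply of_nat_le in E; lia|].
  exists (a :: l); cbn; unfold enc_cons; now rewrite <- E, cancel_to_of.
Qed.

Lemma enc_list_nil lv : enc_list lv = 0 -> lv = [].
Proof. now destruct lv. Qed.

Lemma enc_list_cons lv x l :
  enc_list lv = enc_cons x l -> exists lv', lv = x :: lv' /\ enc_list lv' = l.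
Proof.
  destruct lv as [|y lv']; cbn; unfold enc_cons; [discriminate|].
  intros [= E]; apply to_nat_inj in E; injection E as <- <-; eauto.
Qed.

Lemma dec_fuel_stable fuel : forall n, n < fuel ->
  dec_fuel fuel n = dec_fuel (S fuel) n /\ dec_list_fuel fuel n = dec_list_fuel (S fuel) n.
Proof.
  induction fuel as [|fuel IH]; intros n Hn; [lia|].
  assert (Hq : n <> 0 -> n / 6 < n) by (intros; apply Nat.div_lt; lia).
  split.
  - change (dec_fuel (S ?f) n) with
      (match n mod 6 with
       | 0 => CZero
       | 1 => CSucc
       | 2 => CProj (n / 6)
       | 3 => let (a, b) := of_nat (n / 6) in CComp (dec_fuel f a) (dec_list_fuel f b)
       | 4 => let (a, b) := of_nat (n / 6) in CPrec (dec_fuel f a) (dec_fuel f b)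
       | _ => CMu (dec_fuel f (n / 6))
       end).
    destruct (n mod 6) as [|[|[|[|[|k]]]]] eqn:Hm; auto;
      assert (n <> 0) by (intros ->; discriminate);
      try destruct (of_nat (n / 6)) as [a b] eqn:E;
      try apply of_nat_le in E;
      repeat match goal with
             | |- context [dec_fuel fuel ?m] => rewrite (proj1 (IH m ltac:(lia)))
             | |- context [dec_list_fuel fuel ?m] => rewrite (proj2 (IH m ltac:(lia)))
             end; reflexivity.
  - destruct n as [|n]; [reflexivity|].
    change (dec_list_fuel (S ?f) (S n)) with
      (let (a, b) := of_nat n in dec_fuel f a :: dec_list_fuel f b).
    destruct (of_nat n) as [a b] eqn:E; apply of_nat_le in E.
    now rewrite (proj1 (IH a ltac:(lia))), (proj2 (IH b ltac:(lia))).
Qed.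

Lemma dec_fuel_enough fuel n : n < fuel ->
  dec_fuel fuel n = decode n /\ dec_list_fuel fuel n = dec_list_fuel (S n) n.
Proof.
  induction 1 as [|fuel Hn [IH1 IH2]]; [auto|].
  destruct (dec_fuel_stable fuel n ltac:(lia)) as [E1 E2].
  now rewrite <- E1, <- E2.
Qed.

Lemma dec_list_enc l : dec_list_fuel (S (enc_list l)) (enc_list l) = map decode l.
Proof.
  induction l as [|a l IH]; [reflexivity|].
  cbn [enc_list map]; unfold enc_cons.
  change (dec_list_fuel (S ?f) (S ?m)) with
    (let (a, b) := of_nat m in dec_fuel f a :: dec_list_fuel f b).
  rewrite cancel_of_to; pose proof (to_nat_ge a (enc_list l)).
  set (fuel := S (to_nat (a, enc_list l))).
  rewrite (proj1 (dec_fuel_enough fuel a ltac:(lia))),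
          (proj2 (dec_fuel_enough fuel (enc_list l) ltac:(lia))), IH.
  reflexivity.
Qed.

Lemma decode_mod6 q k : k < 6 ->
  decode (6 * q + k) =
  match k with
  | 0 => CZero
  | 1 => CSucc
  | 2 => CProj q
  | 3 => let (a, b) := of_nat q in CComp (decode a) (dec_list_fuel (S b) b)
  | 4 => let (a, b) := of_nat q in CPrec (decode a) (decode b)
  | _ => CMu (decode q)
  end.
Proof.
  intros Hk.
  assert (Hdiv : (6 * q + k) / 6 = q)
    by (rewrite Nat.mul_comm, Nat.div_add_l, Nat.div_small; lia).
  assert (Hmod : (6 * q + k) mod 6 = k)
    by (rewrite Nat.mul_comm, Nat.add_comm, Nat.Div0.mod_add; apply Nat.mod_small; lia).
  unfold decode at 1; cbn [dec_fuel]; rewrite Hdiv, Hmod.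
  destruct k as [|[|[|[|[|[|k]]]]]]; try lia; try reflexivity;
    try (destruct (of_nat q) as [a b] eqn:E; apply of_nat_le in E);
    repeat match goal with
           | |- context [dec_fuel ?f ?m] => rewrite (proj1 (dec_fuel_enough f m ltac:(lia)))
           | |- context [dec_list_fuel ?f ?m] => rewrite (proj2 (dec_fuel_enough f m ltac:(lia)))
           end; reflexivity.
Qed.

Lemma decode_comp a l : decode (6 * to_nat (a, enc_list l) + 3) = CComp (decode a) (map decode l).
Proof. rewrite decode_mod6, cancel_of_to, dec_list_enc by lia; reflexivity. Qed.

Lemma decode_prec a b : decode (6 * to_nat (a, b) + 4) = CPrec (decode a) (decode b).
Proof. rewrite decode_mod6, cancel_of_to by lia; reflexivity. Qed.

Lemma decode_cases n :
  (exists q, n = 6 * q /\ decode n = CZero) \/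
  (exists q, n = 6 * q + 1 /\ decode n = CSucc) \/
  (exists q, n = 6 * q + 2 /\ decode n = CProj q) \/
  (exists a l, n = 6 * to_nat (a, enc_list l) + 3 /\ decode n = CComp (decode a) (map decode l)) \/
  (exists a b, n = 6 * to_nat (a, b) + 4 /\ decode n = CPrec (decode a) (decode b)) \/
  (exists q, n = 6 * q + 5 /\ decode n = CMu (decode q)).
Proof.
  pose proof (Nat.div_mod_eq n 6) as En; pose proof (Nat.mod_upper_bound n 6 ltac:(lia)).
  set (q := n / 6) in *; set (k := n mod 6) in *; clearbody q k; subst n.
  destruct (of_nat q) as [a b] eqn:Eq.
  destruct (enc_list_surj b) as [l <-].
  assert (Hq : q = to_nat (a, enc_list l)) by now rewrite <- Eq, cancel_to_of.
  destruct k as [|[|[|[|[|[|k]]]]]]; try lia.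
  - left; exists q; now rewrite decode_mod6, Nat.add_0_r by lia.
  - right; left; exists q; now rewrite decode_mod6 by lia.
  - do 2 right; left; exists q; now rewrite decode_mod6 by lia.
  - do 3 right; left; exists a, l; now rewrite Hq, decode_comp.
  - do 4 right; left; exists a, (enc_list l); now rewrite Hq, decode_prec.
  - do 5 right; exists q; now rewrite decode_mod6 by lia.
Qed.

Fixpoint encode (c : code) : nat :=
  match c with
  | CZero => 0
  | CSucc => 1
  | CProj i => 6 * i + 2
  | CComp f gs => 6 * to_nat (encode f, enc_list (map encode gs)) + 3
  | CPrec f g => 6 * to_nat (encode f, encode g) + 4
  | CMu f => 6 * encode f + 5
  end.

Lemma code_ind_nested (P : code -> Prop) :
  P CZero -> P CSucc -> (forall i, P (CProj i)) ->
  (forall f gs, P f -> Forall P gs -> P (CComp f gs)) ->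
  (forall f g, P f -> P g -> P (CPrec f g)) ->
  (forall f, P f -> P (CMu f)) -> forall c, P c.
Proof.
  intros H0 H1 H2 H3 H4 H5; fix IH 1; intros [| |i|f gs|f g|f].
  - exact H0.
  - exact H1.
  - apply H2.
  - apply H3; [apply IH|]; induction gs; constructor; auto.
  - apply H4; apply IH.
  - apply H5; apply IH.
Qed.

Lemma decode_encode c : decode (encode c) = c.
Proof.
  induction c using code_ind_nested; cbn [encode].
  - apply (decode_mod6 0 0); lia.
  - apply (decode_mod6 0 1); lia.
  - now rewrite decode_mod6 by lia.
  - rewrite decode_comp, map_map; f_equal; [assumption|].
    induction H; cbn; f_equal; assumption.
  - now rewrite decode_prec; f_equal.
  - now rewrite decode_mod6 by lia; f_equal.
Qed.

Lemma eval_functional c : forall v y y', eval c v y -> eval c v y' -> y = y'.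
Proof.
  induction c as [| |i|f gs IHf IHgs|f g IHf IHg|f IHf] using code_ind_nested;
    intros v y y' Hy Hy'.
  - inversion Hy; inversion Hy'; congruence.
  - inversion Hy; inversion Hy'; congruence.
  - inversion Hy; inversion Hy'; congruence.
  - assert (Hlist : forall ws ws', eval_list gs v ws -> eval_list gs v ws' -> ws = ws').
    { clear - IHgs; induction IHgs as [|g gs Hg _ IH]; intros ws ws' Hws Hws';
        inversion Hws; inversion Hws'; subst; f_equal; eauto. }
    inversion Hy; inversion Hy'; subst.
    assert (ws = ws0) as <- by eauto; eauto.
  - assert (Hrec : forall n v y y', eval (CPrec f g) (n :: v) y ->
                                    eval (CPrec f g) (n :: v) y' -> y = y').
    { induction n as [|n IHn]; intros v' z z' Hz Hz'; inversion Hz; inversion Hz'; subst; eauto.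
      assert (z0 = z1) as <- by eauto; eauto. }
    inversion Hy; subst; eauto.
  - inversion Hy as [| | | | | |? ? n Hn Hlt]; inversion Hy' as [| | | | | |? ? n' Hn' Hlt']; subst.
    destruct (lt_eq_lt_dec y y') as [[Hl|]|Hl]; auto.
    + destruct (Hlt' y Hl) as [k Hk]; specialize (IHf _ _ _ Hn Hk); discriminate.
    + destruct (Hlt y' Hl) as [k Hk]; specialize (IHf _ _ _ Hn' Hk); discriminate.
Qed.

(** * Derivations of evaluation judgments *)

(* Arguments lists [v], [ws] and code lists [cs] are given by their [enc_list] numbers. *)
Inductive judgment : Type :=
| JEval (c v y : nat)
| JEvalList (cs v ws : nat)
| JNth (i v y : nat).

Definition judgment_num (J : judgment) : nat :=
  match J with
  | JEval c v y => to_nat (0, to_nat (c, to_nat (v, y)))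
  | JEvalList cs v ws => to_nat (1, to_nat (cs, to_nat (v, ws)))
  | JNth i v y => to_nat (2, to_nat (i, to_nat (v, y)))
  end.

Lemma judgment_num_inj J J' : judgment_num J = judgment_num J' -> J = J'.
Proof.
  destruct J, J'; cbn; intros E;
    repeat match goal with H : to_nat _ = to_nat _ |- _ =>
      apply to_nat_inj in H; injection H; clear H; intros end;
    subst; congruence.
Qed.

Definition valid (J : judgment) : Prop :=
  match J with
  | JEval c v y => forall lv, enc_list lv = v -> eval (decode c) lv y
  | JEvalList cs v ws => forall lc lv lw, enc_list lc = cs -> enc_list lv = v ->
                          enc_list lw = ws -> eval_list (map decode lc) lv lw
  | JNth i v y => forall lv, enc_list lv = v -> i < length lv /\ nth i lv 0 = y
  end.

Section Justification.

Variable mem : judgment -> Prop.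

(* The rules of [eval], [eval_list] and [nth], read on code and list numbers. *)
Inductive justified : judgment -> Prop :=
| just_zero q v : justified (JEval (6 * q) v 0)
| just_succ q x v : justified (JEval (6 * q + 1) (enc_cons x v) (S x))
| just_proj q v y : mem (JNth q v y) -> justified (JEval (6 * q + 2) v y)
| just_comp f gs v ws y :
    mem (JEvalList gs v ws) -> mem (JEval f ws y) ->
    justified (JEval (6 * to_nat (f, gs) + 3) v y)
| just_prec0 f g v y :
    mem (JEval f v y) -> justified (JEval (6 * to_nat (f, g) + 4) (enc_cons 0 v) y)
| just_precS f g n v z y :
    mem (JEval (6 * to_nat (f, g) + 4) (enc_cons n v) z) ->
    mem (JEval g (enc_cons n (enc_cons z v)) y) ->
    justified (JEval (6 * to_nat (f, g) + 4) (enc_cons (S n) v) y)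
| just_mu f v n :
    mem (JEval f (enc_cons n v) 0) ->
    (forall m, m < n -> exists k, mem (JEval f (enc_cons m v) (S k))) ->
    justified (JEval (6 * f + 5) v n)
| just_nil v : justified (JEvalList 0 v 0)
| just_cons g gs v w ws :
    mem (JEval g v w) -> mem (JEvalList gs v ws) ->
    justified (JEvalList (enc_cons g gs) v (enc_cons w ws))
| just_nth0 x v : justified (JNth 0 (enc_cons x v) x)
| just_nthS i x v y : mem (JNth i v y) -> justified (JNth (S i) (enc_cons x v) y).

End Justification.

Lemma justified_mono (mem1 mem2 : judgment -> Prop) J :
  (forall J', mem1 J' -> mem2 J') -> justified mem1 J -> justified mem2 J.
Proof.
  intros Hm []; econstructor; eauto.
  intros m Hlt; destruct (H0 m Hlt) as [k Hk]; eauto.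
Qed.

Lemma to_nat_succ_l x y : to_nat (S x, y) = to_nat (x, y) + S (y + x).
Proof. unfold to_nat; rewrite Nat.add_succ_r; cbn; lia. Qed.

Ltac pair_bounds :=
  repeat match goal with
  | |- context [to_nat (?x, ?y)] =>
      lazymatch goal with
      | _ : x <= to_nat (x, y) /\ y <= to_nat (x, y) |- _ => fail
      | _ => pose proof (to_nat_ge x y)
      end
  | H : context [to_nat (?x, ?y)] |- _ =>
      lazymatch goal with
      | _ : x <= to_nat (x, y) /\ y <= to_nat (x, y) |- _ => fail
      | _ => pose proof (to_nat_ge x y)
      end
  end.

Lemma decode_zero q : decode (6 * q) = CZero.
Proof. rewrite <- (Nat.add_0_r (6 * q)); apply (decode_mod6 q 0); lia. Qed.

Lemma valid_zero q v : valid (JEval (6 * q) v 0).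
Proof. intros lv _; rewrite decode_zero; constructor. Qed.

Lemma valid_succ q x v : valid (JEval (6 * q + 1) (enc_cons x v) (S x)).
Proof.
  intros lv Hlv; apply enc_list_cons in Hlv as (lv' & -> & _).
  rewrite decode_mod6 by lia; constructor.
Qed.

Lemma valid_proj q v y : valid (JNth q v y) -> valid (JEval (6 * q + 2) v y).
Proof.
  intros Hq lv Hlv; destruct (Hq lv Hlv) as [Hlt <-].
  rewrite decode_mod6 by lia; now constructor.
Qed.

Lemma valid_comp f gs v ws y :
  valid (JEvalList gs v ws) -> valid (JEval f ws y) ->
  valid (JEval (6 * to_nat (f, gs) + 3) v y).
Proof.
  intros Hgs Hf lv Hlv.
  destruct (enc_list_surj gs) as [lc <-], (enc_list_surj ws) as [lw <-].
  rewrite decode_comp; econstructor; [apply Hgs | apply Hf]; auto.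
Qed.

Lemma valid_prec0 f g v y :
  valid (JEval f v y) -> valid (JEval (6 * to_nat (f, g) + 4) (enc_cons 0 v) y).
Proof.
  intros Hf lv Hlv; apply enc_list_cons in Hlv as (lv' & -> & Hv).
  rewrite decode_prec; constructor; now apply Hf.
Qed.

Lemma valid_precS f g n v z y :
  valid (JEval (6 * to_nat (f, g) + 4) (enc_cons n v) z) ->
  valid (JEval g (enc_cons n (enc_cons z v)) y) ->
  valid (JEval (6 * to_nat (f, g) + 4) (enc_cons (S n) v) y).
Proof.
  intros Hn Hg lv Hlv; apply enc_list_cons in Hlv as (lv' & -> & <-).
  specialize (Hn (n :: lv') eq_refl); rewrite decode_prec in *.
  econstructor; [exact Hn | now apply Hg].
Qed.

Lemma valid_mu f v n :
  valid (JEval f (enc_cons n v) 0) ->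
  (forall m, m < n -> exists k, valid (JEval f (enc_cons m v) (S k))) ->
  valid (JEval (6 * f + 5) v n).
Proof.
  intros Hn Hlt lv <-; rewrite decode_mod6 by lia.
  constructor; [now apply Hn|].
  intros m Hm; destruct (Hlt m Hm) as [k Hk]; exists k; now apply Hk.
Qed.

Lemma valid_nil v : valid (JEvalList 0 v 0).
Proof. intros lc lv lw Hc _ Hw; apply enc_list_nil in Hc, Hw; subst; constructor. Qed.

Lemma valid_cons g gs v w ws :
  valid (JEval g v w) -> valid (JEvalList gs v ws) ->
  valid (JEvalList (enc_cons g gs) v (enc_cons w ws)).
Proof.
  intros Hg Hgs lc lv lw Hc Hv Hw.
  apply enc_list_cons in Hc as (lc' & -> & Hc), Hw as (lw' & -> & Hw).
  constructor; [now apply Hg | now apply Hgs].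
Qed.

Lemma valid_nth0 x v : valid (JNth 0 (enc_cons x v) x).
Proof. intros lv Hlv; apply enc_list_cons in Hlv as (lv' & -> & _); cbn; split; [lia | auto]. Qed.

Lemma valid_nthS i x v y : valid (JNth i v y) -> valid (JNth (S i) (enc_cons x v) y).
Proof.
  intros Hi lv Hlv; apply enc_list_cons in Hlv as (lv' & -> & Hv).
  destruct (Hi lv' Hv); cbn; split; [lia | auto].
Qed.

Definition rank (J : judgment) : nat * nat :=
  match J with JEval c v _ | JEvalList c v _ | JNth c v _ => (c, v) end.

(* Each premise of a rule has a smaller code, or the same code and a shorter
   argument list (the recursive premise of [just_precS]). *)
Theorem justified_sound mem :
  (forall J, mem J -> justified mem J) -> forall J, mem J -> valid J.
Proof.
  intros Hcl.
  enough (H : forall a b J, fst (rank J) = a -> snd (rank J) = b -> mem J -> valid J)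
    by eauto.
  intros a; induction a as [a IHa] using lt_wf_ind.
  intros b; induction b as [b IHb] using lt_wf_ind.
  assert (IH : forall J, fst (rank J) < a \/ fst (rank J) = a /\ snd (rank J) < b ->
                         mem J -> valid J).
  { intros J [Hlt | [Ha Hlt]] HJ; [eapply IHa | eapply IHb]; eauto. }
  intros J Ha Hb Hmem; apply Hcl in Hmem.
  destruct Hmem as [| | | | | | f v n Hn Hlt | | | |]; cbn [rank fst snd] in Ha, Hb; subst a b;
    [ apply valid_zero | apply valid_succ | apply valid_proj | eapply valid_comp
    | apply valid_prec0 | eapply valid_precS | apply valid_mu | apply valid_nil
    | apply valid_cons | apply valid_nth0 | apply valid_nthS ];
    try (intros m Hm; destruct (Hlt m Hm) as [k Hk]; exists k);
    (apply IH; [|eassumption]);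
    cbn [rank fst snd]; unfold enc_cons; rewrite ?to_nat_succ_l; pair_bounds; lia.
Qed.

Definition closed (l : list judgment) : Prop :=
  forall J, In J l -> justified (fun J' => In J' l) J.

Definition derivable (J : judgment) : Prop := exists l, closed l /\ In J l.

Lemma closed_app l1 l2 : closed l1 -> closed l2 -> closed (l1 ++ l2).
Proof.
  intros H1 H2 J HJ; apply in_app_or in HJ as [HJ | HJ];
    [eapply justified_mono, H1, HJ | eapply justified_mono, H2, HJ];
    intros J' HJ'; apply in_or_app; auto.
Qed.

Lemma derivable_by (Js : list judgment) J :
  Forall derivable Js -> justified (fun J' => In J' Js) J -> derivable J.
Proof.
  intros HJs HJ.
  assert (Hcover : exists l, closed l /\ incl Js l).
  { clear HJ; induction HJs as [|J1 Js [l1 [C1 I1]] _ IH].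
    - exists []; split; [intros ? [] | apply incl_nil_l].
    - destruct IH as [l [C IH]].
      exists (l1 ++ l); split; [now apply closed_app|].
      apply incl_cons; [now apply in_or_app; left | now apply incl_appr]. }
  destruct Hcover as [l [Hl Hincl]].
  exists (J :: l); split; [|now left].
  intros J' [<- | HJ']; eapply justified_mono; try (apply Hl, HJ'); try exact HJ;
    cbn; auto.
Qed.

Lemma derivable_family n (J : nat -> nat -> judgment) :
  (forall m, m < n -> exists k, derivable (J m k)) ->
  exists Js, Forall derivable Js /\ forall m, m < n -> exists k, In (J m k) Js.
Proof.
  induction n as [|n IH]; intros H; [exists []; split; [constructor | lia]|].
  destruct IH as [Js [HJs Hin]]; [intros m Hm; apply H; lia|].
  destruct (H n ltac:(lia)) as [k Hk].
  exists (J n k :: Js); split; [now constructor|].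
  intros m Hm; destruct (Nat.eq_dec m n) as [-> | Hne]; [exists k; now left|].
  destruct (Hin m ltac:(lia)) as [k' Hk']; exists k'; now right.
Qed.

Lemma derivable_nth lv i : i < length lv -> derivable (JNth i (enc_list lv) (nth i lv 0)).
Proof.
  revert i; induction lv as [|x lv IH]; intros [|i] Hi; cbn in Hi; try lia.
  - apply (derivable_by []); [constructor | apply just_nth0].
  - apply (derivable_by [JNth i (enc_list lv) (nth i lv 0)]).
    + constructor; [apply IH; lia | constructor].
    + apply just_nthS; now left.
Qed.

Definition evals_derivable (c : nat) : Prop :=
  forall lv y, eval (decode c) lv y -> derivable (JEval c (enc_list lv) y).

Lemma derivable_eval_list lc lv ws :
  Forall evals_derivable lc -> eval_list (map decode lc) lv ws ->
  derivable (JEvalList (enc_list lc) (enc_list lv) (enc_list ws)).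
Proof.
  intros Hlc; revert ws; induction Hlc as [|c lc Hc _ IH]; intros ws Hws;
    inversion Hws; subst.
  - apply (derivable_by []); [constructor | apply just_nil].
  - apply (derivable_by [JEval c (enc_list lv) w; JEvalList (enc_list lc) (enc_list lv) (enc_list ws0)]).
    + repeat constructor; auto.
    + cbn [enc_list]; apply just_cons; cbn; auto.
Qed.

Lemma evals_derivable_comp a lc :
  evals_derivable a -> Forall evals_derivable lc -> evals_derivable (6 * to_nat (a, enc_list lc) + 3).
Proof.
  intros Ha Hlc lv y; rewrite decode_comp; intros Hy; inversion Hy; subst.
  apply (derivable_by [JEvalList (enc_list lc) (enc_list lv) (enc_list ws); JEval a (enc_list ws) y]).
  - repeat constructor; [now apply derivable_eval_list | now apply Ha].
  - apply just_comp with (enc_list ws); cbn; auto.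
Qed.

Lemma evals_derivable_prec a b :
  evals_derivable a -> evals_derivable b -> evals_derivable (6 * to_nat (a, b) + 4).
Proof.
  unfold evals_derivable; rewrite decode_prec.
  generalize (decode a) (decode b); intros f g Ha Hb lv y Hy.
  assert (H : forall n v y, eval (CPrec f g) (n :: v) y ->
                derivable (JEval (6 * to_nat (a, b) + 4) (enc_list (n :: v)) y)).
  { induction n as [|n IH]; intros v z Hz; inversion Hz; subst.
    - apply (derivable_by [JEval a (enc_list v) z]).
      + repeat constructor; now apply Ha.
      + apply just_prec0; now left.
    - match goal with H1 : eval (CPrec _ _) (n :: v) ?z', H2 : eval g _ z |- _ =>
        apply (derivable_by [JEval (6 * to_nat (a, b) + 4) (enc_list (n :: v)) z';
                             JEval b (enc_list (n :: z' :: v)) z]);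
        [ repeat constructor; [apply IH, H1 | apply Hb, H2]
        | cbn [enc_list]; apply just_precS with z'; cbn; auto ]
      end. }
  inversion Hy; subst; apply H; assumption.
Qed.

Lemma evals_derivable_mu q : evals_derivable q -> evals_derivable (6 * q + 5).
Proof.
  intros Hq lv y; rewrite decode_mod6 by lia; intros Hy; inversion Hy as [| | | | | |? ? ? Hy0 Hlt]; subst.
  destruct (derivable_family y (fun m k => JEval q (enc_list (m :: lv)) (S k))) as [Js [HJs Hin]].
  { intros m Hm; destruct (Hlt m Hm) as [k Hk]; exists k; now apply Hq. }
  apply (derivable_by (JEval q (enc_list (y :: lv)) 0 :: Js)).
  - constructor; [now apply Hq | exact HJs].
  - apply just_mu; [now left|].
    intros m Hm; destruct (Hin m Hm) as [k Hk]; exists k; now right.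
Qed.

Theorem evals_derivable_all c : evals_derivable c.
Proof.
  induction c as [c IH] using lt_wf_ind.
  destruct (decode_cases c) as
    [(q & -> & Hd) | [(q & -> & Hd) | [(q & -> & Hd) | [(a & lc & -> & Hd) |
     [(a & b & -> & Hd) | (q & -> & Hd)]]]]].
  - intros lv y; rewrite Hd; intros Hy; inversion Hy; subst.
    apply (derivable_by []); [constructor | apply just_zero].
  - intros lv y; rewrite Hd; intros Hy; inversion Hy; subst.
    apply (derivable_by []); [constructor | apply just_succ].
  - intros lv y; rewrite Hd; intros Hy; inversion Hy; subst.
    apply (derivable_by [JNth q (enc_list lv) (nth q lv 0)]).
    + repeat constructor; now apply derivable_nth.
    + apply just_proj; now left.
  - pose proof (to_nat_ge a (enc_list lc)).
    apply evals_derivable_comp; [apply IH; lia|].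
    apply Forall_forall; intros g Hg; apply IH.
    enough (g < enc_list lc) by lia.
    clear - Hg; induction lc as [|g' lc IHlc]; [destruct Hg|].
    cbn; unfold enc_cons; pose proof (to_nat_ge g' (enc_list lc)).
    destruct Hg as [<- | Hg]; [|specialize (IHlc Hg)]; lia.
  - pose proof (to_nat_ge a b); apply evals_derivable_prec; apply IH; lia.
  - apply evals_derivable_mu, IH; lia.
Qed.

(** * Certificates *)

Definition member (M : nat) (J : judgment) : Prop := Nat.testbit M (judgment_num J) = true.

Definition justified_at (M i : nat) : Prop :=
  exists J, i = judgment_num J /\ justified (member M) J.

(* [M] is read as the finite set of its bits. *)
Definition certificate (M j : nat) : Prop :=
  Nat.testbit M j = true /\ forall i, i < M -> Nat.testbit M i = true -> justified_at M i.

Lemma testbit_lt M x : Nat.testbit M x = true -> x < M.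
Proof.
  intros H; destruct M as [|M]; [now rewrite Nat.bits_0 in H|].
  destruct (Nat.le_gt_cases x (Nat.log2 (S M))) as [Hle | Hgt].
  - pose proof (Nat.log2_lt_lin (S M) ltac:(lia)); lia.
  - now rewrite Nat.bits_above_log2 in H.
Qed.

Lemma certificate_sound M J : certificate M (judgment_num J) -> valid J.
Proof.
  intros [HJ Hall]; apply (justified_sound (member M)); [|exact HJ].
  intros J' HJ'; destruct (Hall _ (testbit_lt _ _ HJ') HJ') as (J'' & E & H).
  now apply judgment_num_inj in E as <-.
Qed.

Fixpoint mask (l : list nat) : nat :=
  match l with [] => 0 | j :: l => Nat.lor (2 ^ j) (mask l) end.

Lemma testbit_mask l x : Nat.testbit (mask l) x = true <-> In x l.
Proof.
  induction l as [|j l IH]; cbn; [rewrite Nat.bits_0; intuition discriminate|].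
  rewrite Nat.lor_spec, Nat.pow2_bits_eqb, orb_true_iff, IH, Nat.eqb_eq; intuition.
Qed.

Lemma certificate_of_derivable J : derivable J -> exists M, certificate M (judgment_num J).
Proof.
  intros (l & Hl & HJ); exists (mask (map judgment_num l)).
  assert (Hmem : forall J', member (mask (map judgment_num l)) J' <-> In J' l).
  { intros J'; unfold member; rewrite testbit_mask; split; [|now apply in_map].
    intros (J'' & E & HJ'')%in_map_iff; now apply judgment_num_inj in E as <-. }
  split; [now apply Hmem|].
  intros i _ (J' & <- & HJ')%testbit_mask%in_map_iff; exists J'; split; [reflexivity|].
  eapply justified_mono, Hl, HJ'; intros J''; apply Hmem.
Qed.

Lemma eval_of_certificate M c lv y :
  certificate M (judgment_num (JEval c (enc_list lv) y)) -> eval (decode c) lv y.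
Proof. intros H; now apply (certificate_sound _ _ H). Qed.

Lemma certificate_of_eval c lv y :
  eval (decode c) lv y -> exists M, certificate M (judgment_num (JEval c (enc_list lv) y)).
Proof. intros H; now apply certificate_of_derivable, evals_derivable_all. Qed.

(* Variables: 60 is the mask [M], 61 the certified judgment, 62 a member of [M],
   63-65 its three components and 66-70 the witnesses of a rule. *)
Definition mem_t (t : term) : formula := FBit (TVar 60) t.
Definition ex_mem (x : nat) (f : formula) : formula := FEx x (TVar 60) f.
Definition cons_t (x l : term) : term := TSucc (TPair x l).
Definition code_t (q : term) (k : nat) : term := TAdd (TMul (TConst 6) q) (TConst k).
Definition judgment_t (tag : nat) (a b c : term) : term :=
  TPair (TConst tag) (TPair a (TPair b c)).

Fixpoint disj (fs : list formula) : formula :=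
  match fs with [] => FLt (TConst 0) (TConst 0) | [f] => f | f :: fs => FOr f (disj fs) end.

Definition eval_rules (a b c : term) : formula := disj [
  ex_mem 66 (FAnd (FEq a (TMul (TConst 6) (TVar 66))) (FEq c (TConst 0)));
  ex_mem 66 (ex_mem 67 (ex_mem 68 (FAnd (FEq a (code_t (TVar 66) 1))
    (FAnd (FEq b (cons_t (TVar 67) (TVar 68))) (FEq c (TSucc (TVar 67)))))));
  ex_mem 66 (FAnd (FEq a (code_t (TVar 66) 2)) (mem_t (judgment_t 2 (TVar 66) b c)));
  ex_mem 66 (ex_mem 67 (ex_mem 68 (FAnd (FEq a (code_t (TPair (TVar 66) (TVar 67)) 3))
    (FAnd (mem_t (judgment_t 1 (TVar 67) b (TVar 68)))
          (mem_t (judgment_t 0 (TVar 66) (TVar 68) c))))));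
  ex_mem 66 (ex_mem 67 (ex_mem 68 (FAnd (FEq a (code_t (TPair (TVar 66) (TVar 67)) 4))
    (FAnd (FEq b (cons_t (TConst 0) (TVar 68)))
          (mem_t (judgment_t 0 (TVar 66) (TVar 68) c))))));
  ex_mem 66 (ex_mem 67 (ex_mem 68 (ex_mem 69 (ex_mem 70
    (FAnd (FEq a (code_t (TPair (TVar 66) (TVar 67)) 4))
    (FAnd (FEq b (cons_t (TSucc (TVar 68)) (TVar 69)))
    (FAnd (mem_t (judgment_t 0 a (cons_t (TVar 68) (TVar 69)) (TVar 70)))
          (mem_t (judgment_t 0 (TVar 67) (cons_t (TVar 68) (cons_t (TVar 70) (TVar 69))) c)))))))));
  ex_mem 66 (FAnd (FEq a (code_t (TVar 66) 5))
    (FAnd (mem_t (judgment_t 0 (TVar 66) (cons_t c b) (TConst 0)))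
          (FAll 67 c (ex_mem 68
             (mem_t (judgment_t 0 (TVar 66) (cons_t (TVar 67) b) (TSucc (TVar 68))))))))].

Definition eval_list_rules (a b c : term) : formula := disj [
  FAnd (FEq a (TConst 0)) (FEq c (TConst 0));
  ex_mem 66 (ex_mem 67 (ex_mem 68 (ex_mem 69
    (FAnd (FEq a (cons_t (TVar 66) (TVar 67)))
    (FAnd (FEq c (cons_t (TVar 68) (TVar 69)))
    (FAnd (mem_t (judgment_t 0 (TVar 66) b (TVar 68)))
          (mem_t (judgment_t 1 (TVar 67) b (TVar 69)))))))))].

Definition nth_rules (a b c : term) : formula := disj [
  ex_mem 66 (FAnd (FEq a (TConst 0)) (FEq b (cons_t c (TVar 66))));
  ex_mem 66 (ex_mem 67 (ex_mem 68 (FAnd (FEq a (TSucc (TVar 66)))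
    (FAnd (FEq b (cons_t (TVar 67) (TVar 68)))
          (mem_t (judgment_t 2 (TVar 66) (TVar 68) c))))))].

Definition justified_f : formula :=
  ex_mem 63 (ex_mem 64 (ex_mem 65
    (disj [FAnd (FEq (TVar 62) (judgment_t 0 (TVar 63) (TVar 64) (TVar 65)))
                (eval_rules (TVar 63) (TVar 64) (TVar 65));
           FAnd (FEq (TVar 62) (judgment_t 1 (TVar 63) (TVar 64) (TVar 65)))
                (eval_list_rules (TVar 63) (TVar 64) (TVar 65));
           FAnd (FEq (TVar 62) (judgment_t 2 (TVar 63) (TVar 64) (TVar 65)))
                (nth_rules (TVar 63) (TVar 64) (TVar 65))]))).

Ltac unfold_formula :=
  cbn [sat eval_term upd Nat.eqb disj justified_f eval_rules eval_list_rules nth_rules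
       mem_t ex_mem cons_t code_t judgment_t].

Lemma justified_at_of_sat r : sat r justified_f -> justified_at (r 60) (r 62).
Proof.
  unfold_formula; intros (a & _ & b & _ & c & _ & H).
  destruct H as [[Hi H] | [[Hi H] | [Hi H]]];
    [exists (JEval a b c) | exists (JEvalList a b c) | exists (JNth a b c)];
    (split; [exact Hi|]); clear Hi;
    repeat match goal with
           | H : _ \/ _ |- _ => destruct H
           | H : exists _, _ |- _ => destruct H
           | H : _ /\ _ |- _ => destruct H
           end; subst.
  all: try (econstructor; eassumption).
  match goal with Hlt : forall m, m < _ -> exists k, _ |- _ =>
    apply just_mu; [eassumption|];
    intros m Hm; destruct (Hlt m Hm) as (k & _ & Hk); now exists k
  end.
Qed.

Tactic Notation "pick" int_or_var(k) := do k right; try left.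

Ltac bounded_exists :=
  repeat match goal with
         | |- exists n, n < _ /\ _ => eexists; split; [shelve|]
         | |- _ /\ _ => split
         end.

(* The witnesses are found by unification; their bounds, shelved meanwhile, hold
   because they are components of members of [M]. *)
Lemma sat_of_justified_at r : r 62 < r 60 -> justified_at (r 60) (r 62) -> sat r justified_f.
Proof.
  unfold_formula; set (M := r 60); set (i := r 62); clearbody M i.
  intros Hi (J & -> & HJ).
  assert (Hmem : forall J, member M J -> judgment_num J < M) by (intros; now apply testbit_lt).
  destruct HJ as [ | | | | | | f v n Hn Hlt | | | | ];
    do 3 (eexists; split; [shelve|]);
    [ left | left | left | left | left | left | left
    | right; left | right; left | right; right | right; right ];
    (split; [reflexivity|]);
    [ pick 0 | pick 1 | pick 2 | pick 3 | pick 4 | pick 5 | pick 6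
    | pick 0 | pick 1 | pick 0 | pick 1 ];
    bounded_exists; try reflexivity; try eassumption.
  - intros m Hm; destruct (Hlt m Hm) as [k Hk]; exists k; split; [|exact Hk].
    apply Hmem in Hk; cbn [judgment_num] in Hk; unfold enc_cons in Hk; pair_bounds; lia.
  Unshelve.
  all: repeat match goal with H : member _ _ |- _ => apply Hmem in H end;
    cbn [judgment_num] in *; unfold enc_cons in *; pair_bounds; lia.
Qed.

Definition certificate_f : formula :=
  FAnd (FBit (TVar 60) (TVar 61))
       (FAll 62 (TVar 60) (FOr (FNot (FBit (TVar 60) (TVar 62))) justified_f)).

Lemma sat_certificate_f r : sat r certificate_f <-> certificate (r 60) (r 61).
Proof.
  unfold certificate_f; cbn [sat eval_term upd Nat.eqb].
  apply and_iff_compat_l; split; intros H i Hi.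
  - intros Hbit; destruct (H i Hi) as [Hnot | Hj]; [contradiction|].
    now apply justified_at_of_sat in Hj.
  - destruct (Nat.testbit (r 60) i) eqn:Hbit; [right | left; congruence].
    apply sat_of_justified_at; cbn [upd Nat.eqb]; auto.
Qed.

Definition certified_f (s c x y : term) : formula :=
  FLet 60 s (FLet 61 (judgment_t 0 c (cons_t x (TConst 0)) y) certificate_f).

(** * The [Pi^0_2] description *)

Lemma prog_len_iff n k :
  0 < k /\ n < 2 ^ k /\ (k = 1 \/ ~ 2 * n < 2 ^ k) <-> k = prog_len n.
Proof.
  unfold prog_len; split.
  - intros (Hk & Hlt & [-> | Hge]).
    + destruct n as [|[|n]]; cbn in *; auto; lia.
    + destruct k as [|k]; [lia|]; f_equal; symmetry; apply Nat.log2_unique; [lia|].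
      rewrite Nat.pow_succ_r' in *; lia.
  - intros ->; split; [lia|].
    destruct (Nat.eq_0_gt_0_cases n) as [-> | Hn]; [cbn; lia|].
    pose proof (Nat.log2_spec n Hn) as Hspec; rewrite Nat.pow_succ_r' in *.
    split; [lia|].
    destruct (Nat.log2 n) eqn:E; [now left | right; cbn in *; lia].
Qed.

Definition certified (M c x y : nat) : Prop :=
  certificate M (judgment_num (JEval c (enc_list [x]) y)).

Definition transfers_below (t c d x y Z : nat) : Prop :=
  ~ certified Z c x y \/ exists Z', Z' < t /\ certified Z' d x y.

(* [k = |n|] and [m = f k] (certificate [Sf]); [g < 2 ^ m] with [L g] (certificate
   [SL]) agrees with [n] on all computations certified below [s]. *)
Definition theta (ef eL n s t : nat) : Prop :=
  exists m, m < t /\ exists Sf, Sf < t /\ exists k, k < t /\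
  (0 < k /\ n < 2 ^ k /\ (k = 1 \/ ~ 2 * n < 2 ^ k)) /\ certified Sf ef k m /\
  exists g, g < 2 ^ m /\ exists SL, SL < t /\ certified SL eL g 1 /\
  forall x, x < s -> forall y, y < s -> forall Z, Z < s ->
    transfers_below t g n x y Z /\ transfers_below t n g x y Z.

Definition transfers_f (c d : term) : formula :=
  FOr (FNot (certified_f (TVar 10) c (TVar 8) (TVar 9)))
      (FEx 11 (TVar 2) (certified_f (TVar 11) d (TVar 8) (TVar 9))).

(* Variables 0-11 stand for [n s t m Sf k g SL x y Z Z'] in [theta]. *)
Definition theta_f (ef eL : nat) : formula :=
  FEx 3 (TVar 2) (FEx 4 (TVar 2) (FEx 5 (TVar 2)
  (FAnd (FAnd (FLt (TConst 0) (TVar 5)) (FAnd (FLt (TVar 0) (TPow (TConst 2) (TVar 5)))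
        (FOr (FEq (TVar 5) (TConst 1))
             (FNot (FLt (TMul (TConst 2) (TVar 0)) (TPow (TConst 2) (TVar 5)))))))
  (FAnd (certified_f (TVar 4) (TConst ef) (TVar 5) (TVar 3))
  (FEx 6 (TPow (TConst 2) (TVar 3)) (FEx 7 (TVar 2)
  (FAnd (certified_f (TVar 7) (TConst eL) (TVar 6) (TConst 1))
  (FAll 8 (TVar 1) (FAll 9 (TVar 1) (FAll 10 (TVar 1)
    (FAnd (transfers_f (TVar 6) (TVar 0)) (transfers_f (TVar 0) (TVar 6))))))))))))).

Lemma sat_theta_f ef eL r : sat r (theta_f ef eL) <-> theta ef eL (r 0) (r 1) (r 2).
Proof.
  unfold theta_f, transfers_f, certified_f.
  cbn [sat eval_term upd Nat.eqb judgment_t cons_t].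
  setoid_rewrite sat_certificate_f; cbn [upd Nat.eqb eval_term].
  reflexivity.
Qed.

Lemma decidable_rel3_sat K f :
  binders_below (3 + K) f = true ->
  decidable_rel3 (fun n x y => sat (fun i => nth i ([n; x; y] ++ repeat 0 K) 0) f).
Proof.
  intros Hf.
  exists (encode (CComp (compile (3 + K) f) ([CProj 0; CProj 1; CProj 2] ++ repeat CZero K))).
  intros n x y; rewrite decode_encode.
  assert (Hargs : eval_list ([CProj 0; CProj 1; CProj 2] ++ repeat CZero K) [n; x; y]
                            ([n; x; y] ++ repeat 0 K)).
  { do 3 (constructor; [eval_proj|]).
    clear Hf; induction K as [|K IH]; constructor; [constructor | exact IH]. }
  set (env := [n; x; y] ++ repeat 0 K) in *.
  assert (Heval : eval (CComp (compile (3 + K) f) ([CProj 0; CProj 1; CProj 2] ++ repeat CZero K))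
                    [n; x; y] (Nat.b2n (satb (fun i => nth i env 0) f))).
  { econstructor; [exact Hargs|].
    replace (3 + K) with (length env) in * by (unfold env; now rewrite length_app, repeat_length).
    now apply eval_compile. }
  rewrite <- !satbP; destruct (satb _ f); split; intros H; auto; congruence.
Qed.

Lemma decidable_rel3_iff (R R' : nat -> nat -> nat -> Prop) :
  (forall n x y, R n x y <-> R' n x y) -> decidable_rel3 R -> decidable_rel3 R'.
Proof.
  intros HR [e He]; exists e; intros n x y; rewrite <- !HR; apply He.
Qed.

Lemma decidable_theta ef eL : decidable_rel3 (theta ef eL).
Proof.
  (* [theta_f] only binds variables below [3 + 71]. *)
  eapply decidable_rel3_iff; [|apply (decidable_rel3_sat 71 (theta_f ef eL)); reflexivity].
  intros n x y; apply sat_theta_f.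
Qed.

Lemma common_bound (P : nat -> nat -> Prop) N :
  (forall u t t', t <= t' -> P u t -> P u t') ->
  (forall u, u < N -> exists t, P u t) -> exists t, forall u, u < N -> P u t.
Proof.
  intros Hmono; induction N as [|N IH]; intros H; [exists 0; lia|].
  destruct IH as [t1 H1]; [intros u Hu; apply H; lia|].
  destruct (H N ltac:(lia)) as [t2 H2].
  exists (max t1 t2); intros u Hu.
  destruct (Nat.eq_dec u N) as [-> | Hne].
  - eapply Hmono; [apply Nat.le_max_r | exact H2].
  - eapply Hmono; [apply Nat.le_max_l | apply H1; lia].
Qed.

Lemma antitone_witness N (G : nat -> nat -> Prop) :
  (forall g s s', s <= s' -> G g s' -> G g s) ->
  (forall s, exists g, g < N /\ G g s) -> exists g, g < N /\ forall s, G g s.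
Proof.
  intros Hanti HG; apply NNPP; intros Hnone.
  destruct (common_bound (fun g s => ~ G g s) N) as [s0 Hs0].
  - intros g s s' Hs Hn HG'; apply Hn, (Hanti g s s'); assumption.
  - intros g Hg; apply not_all_ex_not; intros Hall; apply Hnone; eauto.
  - destruct (HG s0) as [g [Hg HGg]]; exact (Hs0 g Hg HGg).
Qed.

Lemma transfers_below_mono t t' c d x y Z :
  t <= t' -> transfers_below t c d x y Z -> transfers_below t' c d x y Z.
Proof. intros Ht [H | (Z' & HZ' & H)]; [now left | right; exists Z'; split; [lia | exact H]]. Qed.

Lemma transfers_below_of_equiv c d x y Z :
  (phi c x y -> phi d x y) -> exists t, transfers_below t c d x y Z.
Proof.
  intros Hcd; destruct (classic (certified Z c x y)) as [Hc | Hc]; [|exists 0; now left].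
  apply eval_of_certificate, Hcd, certificate_of_eval in Hc as [Z' HZ'].
  exists (S Z'); right; exists Z'; auto.
Qed.

Lemma phi_of_transfers c d x y :
  (forall Z, exists t, transfers_below t c d x y Z) -> phi c x y -> phi d x y.
Proof.
  intros H Hc; destruct (certificate_of_eval _ _ _ Hc) as [Z HZ].
  destruct (H Z) as [t [Hn | (Z' & _ & HZ')]]; [contradiction | exact (eval_of_certificate _ _ _ _ HZ')].
Qed.

Lemma lt_pow2_prog_len g : g < 2 ^ prog_len g.
Proof.
  unfold prog_len; destruct g as [|g]; [cbn; lia|].
  apply Nat.log2_spec; lia.
Qed.

Section Succinct.

Variables (L : nat -> Prop) (f : nat -> nat) (ef eL : nat).
Hypothesis Hef : forall m, eval (decode ef) [m] (f m).
Hypothesis HeL : forall m, (L m -> eval (decode eL) [m] 1) /\ (~ L m -> eval (decode eL) [m] 0).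

Lemma theta_of_equiv n g :
  L g -> equiv_prog g n -> prog_len g <= f (prog_len n) -> forall s, exists t, theta ef eL n s t.
Proof.
  intros Lg Eg Hlen s.
  destruct (certificate_of_eval ef [prog_len n] _ (Hef (prog_len n))) as [Sf HSf].
  destruct (certificate_of_eval eL [g] 1 (proj1 (HeL g) Lg)) as [SL HSL].
  set (agree t x y Z := transfers_below t g n x y Z /\ transfers_below t n g x y Z).
  assert (Hmono : forall x y Z t t', t <= t' -> agree t x y Z -> agree t' x y Z)
    by (intros x y Z t t' Ht []; split; eapply transfers_below_mono; eauto).
  assert (Hagree : forall x y Z, exists t, agree t x y Z).
  { intros x y Z.
    destruct (transfers_below_of_equiv g n x y Z (proj1 (Eg x y))) as [t1 H1].
    destruct (transfers_below_of_equiv n g x y Z (proj2 (Eg x y))) as [t2 H2].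
    exists (max t1 t2); split.
    - apply (transfers_below_mono t1); [apply Nat.le_max_l | exact H1].
    - apply (transfers_below_mono t2); [apply Nat.le_max_r | exact H2]. }
  destruct (common_bound (fun x t => forall y, y < s -> forall Z, Z < s -> agree t x y Z) s)
    as [t0 Ht0].
  { intros x t t' Ht H y Hy Z HZ; eapply Hmono; eauto. }
  { intros x _; apply (common_bound (fun y t => forall Z, Z < s -> agree t x y Z)).
    - intros y t t' Ht H Z HZ; eapply Hmono; eauto.
    - intros y _; apply common_bound; [intros; eapply Hmono; eauto | auto]. }
  exists (S (f (prog_len n) + Sf + prog_len n + SL + t0)).
  exists (f (prog_len n)); split; [lia|]; exists Sf; split; [lia|].
  exists (prog_len n); split; [lia|]; split; [now apply prog_len_iff|]; split; [exact HSf|].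
  exists g; split.
  { eapply Nat.lt_le_trans; [apply lt_pow2_prog_len | apply Nat.pow_le_mono_r; [lia | exact Hlen]]. }
  exists SL; split; [lia|]; split; [exact HSL|].
  intros x Hx y Hy Z HZ; eapply Hmono; [|apply Ht0; auto]; lia.
Qed.

Lemma equiv_of_theta n :
  (forall s, exists t, theta ef eL n s t) -> exists g, L g /\ equiv_prog g n.
Proof.
  intros H.
  set (G g s := exists t, (exists SL, SL < t /\ certified SL eL g 1) /\
                  forall x, x < s -> forall y, y < s -> forall Z, Z < s ->
                    transfers_below t g n x y Z /\ transfers_below t n g x y Z).
  destruct (antitone_witness (2 ^ f (prog_len n)) G) as [g [_ Hg]].
  - intros g s s' Hs (t & HL & Hall); exists t; split; [exact HL|].
    intros x Hx y Hy Z HZ; apply Hall; lia.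
  - intros s; destruct (H s) as (t & m & _ & Sf & _ & k & _ & Hk & HSf & g & Hg & SL & HSL & HcL & Hall).
    apply prog_len_iff in Hk as ->.
    assert (m = f (prog_len n)) as ->
      by (eapply eval_functional; [apply (eval_of_certificate _ _ _ _ HSf) | apply Hef]).
    exists g; split; [exact Hg|]; exists t; eauto.
  - exists g; split.
    + destruct (Hg 0) as (t & (SL & _ & HSL) & _).
      apply eval_of_certificate in HSL; apply NNPP; intros HnL.
      pose proof (eval_functional _ _ _ _ HSL (proj2 (HeL g) HnL)); discriminate.
    + intros x y; split; apply phi_of_transfers; intros Z;
        destruct (Hg (S (x + y + Z))) as (t & _ & Hall); exists t;
        apply Hall; lia.
Qed.

End Succinct.

Theorem mainTheorem10 (L psi : nat -> Prop) :
  computably_succinct L -> functional psi -> captures L psi -> Pi02 psi.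
Proof.
  intros [f [[ef Hef] Hsucc]] Hfun [[eL HeL] [HLpsi Hcap]].
  exists (theta ef eL); split; [apply decidable_theta|].
  intros n; split.
  - intros Hn; destruct (Hcap n Hn) as [g0 [Lg0 Eg0]].
    destruct (Hsucc n (ex_intro _ g0 (conj Lg0 Eg0))) as (g & Lg & Eg & Hlen).
    exact (theta_of_equiv L f ef eL Hef HeL n g Lg Eg Hlen).
  - intros H; destruct (equiv_of_theta L f ef eL Hef HeL n H) as (g & Lg & Eg).
    apply (Hfun g n Eg), HLpsi, Lg.
Qed.
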